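(* Let $M$ be a matroid on $S$ and $N$ a matroid on $T$ with $S\cap T=\emptyset$, let $P=M\mathbin{\Box} N$, and let $U\subseteq V\subseteq S\cup T$. Then $$P(U,V) = (\mathrm{T}^j M)(U\cap S,\,V\cap S)\ \mathbin{\Box}\ (\mathrm{L}^i N)(U\cap T,\,V\cap T),$$ where $j=\nu_N(U\cap T)$ and $i=\lambda_M(V\cap S)$.
   Context: For a matroid $M$ on $S$ write $\rho_M$ for rank, $\rho(M)=\rho_M(S)$, $\nu_M(A)=|A|-\rho_M(A)$, $\lambda_M(A)=\rho(M)-\rho_M(A)$. For matroids $M$ on $S$ and $N$ on $T$ with $S\cap T=\emptyset$, the free product $M\mathbin{\Box} N$ is the matroid on $S\cup T$ whose independent sets are those $A$ with $A\cap S$ independent in $M$ and $\lambda_M(A\cap S)\geq\nu_N(A\cap T)$. For a matroid $M$ on $S$ and $A\subseteq B\subseteq S$, $M(A,B)$ denotes the minor $(M|B)/A=(M/A)|(B\setminus A)$. The truncation $\mathrm{T}M$ has as independent sets the independent sets $A$ of $M$ with $|A|\leq\max\{0,\rho(M)-1\}$; the Higgs lift $\mathrm{L}M$ has as independent sets the $A\subseteq S$ with $\nu_M(A)\leq 1$; $\mathrm{T}^j$, $\mathrm{L}^i$ are the iterates. *)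

From mathcomp Require Import all_boot.
Set Implicit Arguments. Unset Strict Implicit. Unset Printing Implicit Defensive.

(* A (candidate) matroid on a finite ground set [ground] inside an ambient
   finite type E, given by its family of independent sets. *)
Record matroid (E : finType) := Matroid {
  ground : {set E};
  indep : {set E} -> bool
}.

Section Matroids.
Variable E : finType.
Implicit Types (M N : matroid E) (A B I J : {set E}).

Definition is_matroid M : Prop :=
  [/\ indep M set0,
      (forall I, indep M I -> I \subset ground M),
      (forall I J, J \subset I -> indep M I -> indep M J) &
      (forall I J, indep M I -> indep M J -> #|I| < #|J| ->
         exists2 x, x \in J :\: I & indep M (x |: I))].

Definition rank M A : nat := \max_(B : {set E} | (B \subset A) && indep M B) #|B|.
Definition rk M : nat := rank M (ground M).
Definition nullity M A : nat := #|A| - rank M A.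
Definition lambda M A : nat := rk M - rank M A.

(* Free product M [] N (ground sets assumed disjoint). *)
Definition free_product M N : matroid E :=
  Matroid (ground M :|: ground N)
    (fun A => [&& A \subset ground M :|: ground N,
                  indep M (A :&: ground M) &
                  nullity N (A :&: ground N) <= lambda M (A :&: ground M)]).

(* M(A,B) = (M|B)/A : ground B \ A; I independent iff
   I ⊆ B \ A and rho_M(I ∪ A) = |I| + rho_M(A). *)
Definition minor M A B : matroid E :=
  Matroid (B :\: A)
    (fun I => (I \subset B :\: A) && (rank M (I :|: A) == #|I| + rank M A)).

Definition trunc M : matroid E :=
  Matroid (ground M) (fun A => indep M A && (#|A| <= maxn 0 (rk M - 1))).

Definition hlift M : matroid E :=
  Matroid (ground M) (fun A => (A \subset ground M) && (nullity M A <= 1)).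

Definition meq M N : Prop :=
  ground M = ground N /\ forall A, indep M A = indep N A.

End Matroids.

From mathcomp Require Import all_boot zify.
Set Implicit Arguments. Unset Strict Implicit. Unset Printing Implicit Defensive.

(* Everything is computed through rank functions.  The free product has rank
   ρ_P(X) = min(ρ_M(X_S) + |X_T|, ρ(M) + ρ_N(X_T)); the iterates T^j M and L^i N are the
   matroids [truncate M (ρ(M) - j)] and [elongate N i], with ranks min(ρ_M, ρ(M) - j) and
   X ↦ min(|X_T|, ρ_N(X) + i); and a minor M(A,B) of a matroid has rank
   X ↦ ρ_M(X ∪ A) - ρ_M(A), which applies to the truncation and elongation because they are
   matroids again.  Both sides then declare a set I ⊆ V \ U independent exactly when the same
   inequality between these piecewise-linear expressions holds. *)

Lemma cardsU_disjoint (T : finType) (A B : {set T}) :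
  [disjoint A & B] -> #|A :|: B| = #|A| + #|B|.
Proof. by move=> dAB; apply/eqP; rewrite (leq_card_setU A B).2. Qed.

Lemma exists_subset_card (T : finType) (A : {set T}) k :
  k <= #|A| -> exists2 B : {set T}, B \subset A & #|B| = k.
Proof.
case/card_geqP=> s [uniq_s size_s sA]; exists [set x in s].
  by apply/subsetP=> x; rewrite inE => /sA.
by rewrite cardsE (card_uniqP uniq_s).
Qed.

Section Rank.
Variables (E : finType) (K : matroid E).
Implicit Types A B X : {set E}.

Lemma indep_leq_rank A B : B \subset A -> indep K B -> #|B| <= rank K A.
Proof. by move=> sBA iB; apply: (bigmax_sup B) => //; rewrite sBA. Qed.

Lemma rank_leq_card A : rank K A <= #|A|.
Proof. by apply/bigmax_leqP=> B /andP[sBA _]; apply: subset_leq_card. Qed.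

Lemma rankS A B : A \subset B -> rank K A <= rank K B.
Proof.
move=> sAB; apply/bigmax_leqP=> C /andP[sCA iC].
exact: indep_leq_rank (subset_trans sCA sAB) iC.
Qed.

Lemma rank_indep A : indep K A -> rank K A = #|A|.
Proof. by move=> iA; apply/eqP; rewrite eqn_leq rank_leq_card indep_leq_rank. Qed.

Lemma exists_basis A : indep K set0 ->
  exists2 B : {set E}, B \subset A & indep K B /\ #|B| = rank K A.
Proof.
move=> i0; rewrite /rank.
have [|B] := @eq_bigmax_cond _ (fun B => (B \subset A) && indep K B) (fun B => #|B|).
  by apply/card_gt0P; exists set0; rewrite unfold_in /= sub0set.
by rewrite unfold_in => /andP[sBA iB] ->; exists B.
Qed.

End Rank.

Section MatroidEquality.
Variable E : finType.
Implicit Types K L M N : matroid E.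

Lemma meq_sym K L : meq K L -> meq L K.
Proof. by case=> gKL iKL; split=> // A; rewrite iKL. Qed.

Lemma meq_trans K L M : meq K L -> meq L M -> meq K M.
Proof. by case=> gKL iKL [gLM iLM]; split=> [|A]; rewrite ?gKL ?iKL. Qed.

Lemma meq_rank K L X : meq K L -> rank K X = rank L X.
Proof. by case=> _ iKL; apply: eq_bigl => B; rewrite iKL. Qed.

Lemma meq_rk K L : meq K L -> rk K = rk L.
Proof. by move=> eKL; rewrite /rk (meq_rank _ eKL) eKL.1. Qed.

Lemma meq_minor K L A B : meq K L -> meq (minor K A B) (minor L A B).
Proof. by move=> eKL; split=> // I /=; rewrite !(meq_rank _ eKL). Qed.

Lemma meq_free_product K K' L L' :
  meq K K' -> meq L L' -> meq (free_product K L) (free_product K' L').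
Proof.
move=> eK eL; split=> [|A] /=; rewrite eK.1 eL.1 // eK.2.
by rewrite /nullity /lambda (meq_rk eK) !(meq_rank _ eK) !(meq_rank _ eL).
Qed.

End MatroidEquality.

Definition truncate (E : finType) (M : matroid E) (t : nat) : matroid E :=
  Matroid (ground M) (fun A => indep M A && (#|A| <= t)).

Definition elongate (E : finType) (M : matroid E) (k : nat) : matroid E :=
  Matroid (ground M) (fun A => (A \subset ground M) && (nullity M A <= k)).

Section Matroid.
Variables (E : finType) (M : matroid E).
Hypothesis mM : is_matroid M.
Implicit Types A B I J X Z : {set E}.

Lemma indep_set0 : indep M set0. Proof. by case: mM. Qed.

Lemma indep_ground I : indep M I -> I \subset ground M.
Proof. by case: mM => _ + _ _; apply. Qed.

Lemma indepS I J : J \subset I -> indep M I -> indep M J.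
Proof. by case: mM => _ _ + _; apply. Qed.

Lemma indep_augment I J : indep M I -> indep M J -> #|I| < #|J| ->
  exists2 x, x \in J :\: I & indep M (x |: I).
Proof. by case: mM => _ _ _; apply. Qed.

Lemma rankU_leq A B : rank M (A :|: B) <= rank M A + #|B|.
Proof.
apply/bigmax_leqP=> C /andP[sC iC].
have le_CB : #|C :\: B| <= rank M A.
  apply: indep_leq_rank; last exact: indepS (subsetDl C B) iC.
  by rewrite subDset setUC.
rewrite -(cardsID B C) addnC leq_add // subset_leq_card ?subsetIr //.
Qed.

Lemma nullityS A B : A \subset B -> nullity M A <= nullity M B.
Proof.
move=> sAB; have eB : A :|: (B :\: A) = B by rewrite -{2}(setID B A) (setIidPr sAB).
have := cardsID A B; rewrite (setIidPr sAB).
have := rankU_leq A (B :\: A); rewrite eB.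
have := rank_leq_card M A; rewrite /nullity; lia.
Qed.

Lemma indep_rankE A : indep M A = (rank M A == #|A|).
Proof.
apply/idP/idP=> [/rank_indep->//|/eqP rA].
have [B sBA [iB cB]] := exists_basis A indep_set0.
suff <- : B = A by [].
by apply/eqP; rewrite eqEcard sBA cB rA leqnn.
Qed.

Lemma rank_setI_ground X : rank M (X :&: ground M) = rank M X.
Proof.
apply/eqP; rewrite eqn_leq rankS ?subsetIl //=.
have [B sBX [iB <-]] := exists_basis X indep_set0.
by rewrite indep_leq_rank // subsetI sBX indep_ground.
Qed.

Lemma indep_extend I Z : I \subset Z -> indep M I ->
  exists2 B : {set E}, I \subset B /\ B \subset Z & indep M B /\ #|B| = rank M Z.
Proof.
have [C sCZ [iC cC]] := exists_basis Z indep_set0.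
move=> sIZ iI; move eZI: (rank M Z - #|I|) => n.
elim: n I eZI sIZ iI => [|n IH] I dI sIZ iI.
  exists I => //; split=> //; apply/eqP; rewrite eqn_leq indep_leq_rank //.
  by rewrite -subn_eq0 dI.
have [|x /setDP[xC xI] ixI] := indep_augment iI iC; first by rewrite cC; lia.
have [|||B [sxIB sBZ] iB] := IH (x |: I).
- by rewrite cardsU1 xI; lia.
- by rewrite subUset sub1set (subsetP sCZ) ?sIZ.
- exact: ixI.
by exists B => //; split=> //; apply: subset_trans sxIB; apply: subsetUr.
Qed.

Lemma rank_minor A B X : X \subset B :\: A ->
  rank (minor M A B) X = rank M (X :|: A) - rank M A.
Proof.
move=> sX; apply/eqP; rewrite eqn_leq; apply/andP; split.
  apply/bigmax_leqP=> J /andP[sJX /andP[_ /eqP rJA]].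
  by have := rankS M (setSU A sJX); lia.
have [I sIA [iI cI]] := exists_basis A indep_set0.
have [C [sIC sCXA] [iC cC]] := indep_extend (subset_trans sIA (subsetUr X A)) iI.
have sJX : C :\: A \subset X by rewrite subDset setUC.
have CA : #|C :&: A| <= rank M A.
  exact: indep_leq_rank (subsetIr C A) (indepS (subsetIl C A) iC).
have cJI : #|(C :\: A) :|: I| = #|C :\: A| + #|I|.
  by apply: cardsU_disjoint; apply: disjointWr sIA _; rewrite disjoints_subset setDE subsetIr.
have rJA : rank M ((C :\: A) :|: A) = #|C :\: A| + rank M A.
  apply/eqP; rewrite eqn_leq [_ :|: A]setUC addnC rankU_leq addnC -cI -cJI /=.
  apply: indep_leq_rank; first by rewrite setUC; apply: setSU.
  by apply: indepS iC; rewrite subUset subsetDl.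
apply: leq_trans (indep_leq_rank sJX _); last first.
  by rewrite /= rJA eqxx (subset_trans sJX sX).
by have := cardsID A C; lia.
Qed.

Lemma rk_minor A B : A \subset B -> rk (minor M A B) = rank M B - rank M A.
Proof. by move=> sAB; rewrite /rk rank_minor // setUC -{2}(setID B A) (setIidPr sAB). Qed.

Lemma truncate_matroid t : is_matroid (truncate M t).
Proof.
split=> [|I|I J sJI /andP[iI cI]|I J /andP[iI cI] /andP[iJ cJ] lt_IJ] /=.
- by rewrite indep_set0 cards0.
- by case/andP=> /indep_ground.
- by rewrite (indepS sJI iI) (leq_trans (subset_leq_card sJI) cI).
have [x /setDP[xJ xI] ixI] := indep_augment iI iJ lt_IJ.
by exists x; rewrite ?inE ?xJ ?xI // ixI cardsU1 xI; lia.
Qed.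

Lemma rank_truncate t X : rank (truncate M t) X = minn (rank M X) t.
Proof.
apply/eqP; rewrite eqn_leq; apply/andP; split.
  apply/bigmax_leqP=> C /andP[sCX /andP[iC cC]].
  by rewrite leq_min cC indep_leq_rank.
have [B sBX [iB cB]] := exists_basis X indep_set0.
have [D sDB cD] : exists2 D : {set E}, D \subset B & #|D| = minn (rank M X) t.
  by apply: exists_subset_card; rewrite cB geq_minl.
rewrite -cD; apply: indep_leq_rank (subset_trans sDB sBX) _.
by rewrite /= (indepS sDB iB) cD geq_minr.
Qed.

Lemma elongate_matroid k : is_matroid (elongate M k).
Proof.
split=> [|I /andP[]//|I J sJI /andP[sI nI]|I J /andP[sI nI] /andP[sJ nJ] lt_IJ] /=.
- by rewrite sub0set /nullity cards0.
- by rewrite (subset_trans sJI sI) (leq_trans (nullityS sJI) nI).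
have rI := rank_leq_card M I; have rJ := rank_leq_card M J.
have rIxI x : rank M I <= rank M (x |: I) by rewrite rankS ?subsetUr.
have [ltk | gek] := ltnP (nullity M I) k.
  have [x xJI] : exists x, x \in J :\: I.
    by apply/card_gt0P; rewrite cardsD; have := subset_leq_card (subsetIr J I); lia.
  have [xJ xI] := setDP xJI; exists x => //.
  rewrite subUset sub1set (subsetP sJ) //= sI /nullity cardsU1 xI.
  by have := rIxI x; move: ltk; rewrite /nullity; lia.
have [B sBI [iB cB]] := exists_basis I indep_set0.
have [C sCJ [iC cC]] := exists_basis J indep_set0.
have [|x /setDP[xC xB] ixB] := indep_augment iB iC; first by move: nJ gek; rewrite /nullity; lia.
have xI : x \notin I.
  apply/negP=> xI; have sxBI : x |: B \subset I by rewrite subUset sub1set xI sBI.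
  by have := indep_leq_rank sxBI ixB; rewrite cardsU1 xB cB ltnn.
exists x; first by rewrite inE xI (subsetP sCJ).
rewrite subUset sub1set (subsetP sJ) ?(subsetP sCJ) //= sI /nullity cardsU1 xI.
have := indep_leq_rank (setUS [set x] sBI) ixB; rewrite cardsU1 xB.
by move: gek nI; rewrite /nullity; lia.
Qed.

Lemma rank_elongate k X :
  rank (elongate M k) X = minn #|X :&: ground M| (rank M X + k).
Proof.
apply/eqP; rewrite eqn_leq; apply/andP; split.
  apply/bigmax_leqP=> C /andP[sCX /andP[sC nC]]; rewrite leq_min.
  rewrite subset_leq_card ?subsetI ?sCX //=.
  by have := rankS M sCX; have := rank_leq_card M C; move: nC; rewrite /nullity; lia.
rewrite -rank_setI_ground; set W := X :&: ground M.
have [B sBW [iB cB]] := exists_basis W indep_set0.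
have [Y sY cY] : exists2 Y : {set E}, Y \subset W :\: B & #|Y| = minn (#|W| - rank M W) k.
  by apply: exists_subset_card; rewrite cardsD (setIidPr sBW) cB geq_minl.
have dBY : [disjoint B & Y].
  by rewrite disjoint_sym; apply: disjointWl sY _; rewrite disjoints_subset setDE subsetIr.
have sBYW : B :|: Y \subset W by rewrite subUset sBW (subset_trans sY (subsetDl W B)).
have := rank_leq_card M W; have := rankS M (subsetUl B Y); rewrite (rank_indep iB).
move=> rBY rW; apply: leq_trans (indep_leq_rank (subset_trans sBYW (subsetIl X _)) _).
  by rewrite cardsU_disjoint // cY cB; lia.
by rewrite /= (subset_trans sBYW (subsetIr X _)) /nullity cardsU_disjoint // cY; lia.
Qed.

Lemma iter_trunc j : meq (iter j (@trunc E) M) (truncate M (rk M - j)).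
Proof.
elim: j => [|j IH].
  split=> // A /=; rewrite subn0; case iA: (indep M A) => //=.
  by rewrite /rk indep_leq_rank ?indep_ground.
split=> [|A]; rewrite iterS /=; first exact: IH.1.
have -> : rk (iter j (@trunc E) M) = rk M - j.
  by rewrite (meq_rk IH) /rk /= rank_truncate; apply/minn_idPr/leq_subr.
rewrite IH.2 /= max0n subn1 subnS -andbA; congr (_ && _).
by apply: andb_idl => /leq_trans; apply; apply: leq_pred.
Qed.

Lemma iter_hlift i : meq (iter i (@hlift E) M) (elongate M i).
Proof.
elim: i => [|i IH].
  split=> // A /=; apply/idP/andP=> [iA|[sA]]; last first.
    by rewrite /nullity leqn0 subn_eq0 indep_rankE eqn_leq rank_leq_card.
  by rewrite indep_ground // /nullity rank_indep ?subnn.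
split=> [|A]; rewrite iterS /=; first exact: IH.1.
rewrite IH.1; case sA: (A \subset ground M) => //=.
rewrite /nullity (meq_rank _ IH) rank_elongate (setIidPl sA).
lia.
Qed.

End Matroid.

Lemma minor_free_product_arith_core (a b v p q y i j t : nat) :
  a <= b <= a + p -> b <= v -> y <= q -> v + i = t + j ->
  (minn (b + q) (t + y) == p + q + minn a t) =
  (minn b t == p + minn a t) &&
  (q - (minn (q + j) (y + i) - minn j i) <=
     minn v t - minn a t - (minn b t - minn a t)).
Proof.
move=> ab bv yq vit.
have -> : minn v t - minn a t - (minn b t - minn a t) = minn v t - minn b t by lia.
have [le_ij | lt_ji] := leqP i j.
  rewrite (minn_idPr (_ : y + i <= q + j)) ?(minn_idPr (_ : t <= v)); lia.
rewrite (minn_idPl (_ : v <= t)); lia.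
Qed.

(* With a = ρ_M(U_S), b = ρ_M(I_S ∪ U_S), v = ρ_M(V_S), r = ρ(M), p = |I_S|,
   c = ρ_N(U_T), d = ρ_N(I_T ∪ U_T), u = |U_T| and q = |I_T|, the left side says that
   I is independent in P(U,V) and the right side that it is independent in the free
   product of the two minors, where t = ρ(M) - j is the rank of T^j M and i = λ_M(V_S). *)
Lemma minor_free_product_arith (a b v r p c d u q : nat) :
  a <= b <= a + p -> b <= v <= r -> c <= d <= c + q -> c <= u ->
  let t := r - (u - c) in let i := r - v in
  (minn (b + (q + u)) (r + d) == p + q + minn (a + u) (r + c)) =
  (minn b t == p + minn a t) &&
  (q - (minn (q + u) (d + i) - minn u (c + i)) <=
     minn v t - minn a t - (minn b t - minn a t)).
Proof.
(* Write r = v + i, d = c + y, u = c + j; then c cancels and, when j <= r, so does j. *)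
move=> ab /andP[bv /subnKC <-] /andP[/subnKC <- +] /subnKC <- /=.
move: (r - v) (d - c) (u - c) => i y j; rewrite leq_add2l !addKn => yq.
have -> : minn (q + (c + j)) (c + y + i) - minn (c + j) (c + i) =
          minn (q + j) (y + i) - minn j i by lia.
have -> : minn (b + (q + (c + j))) (v + i + (c + y)) =
          c + minn (b + q + j) (v + i + y) by lia.
have -> : p + q + minn (a + (c + j)) (v + i + c) =
          c + (p + q + minn (a + j) (v + i)) by lia.
rewrite eqn_add2l.
have [le_jr | lt_rj] := leqP j (v + i).
  have [t vit] : exists t, v + i = j + t by exists (v + i - j); lia.
  have -> : v + i - j = t by lia.
  have -> : (minn (b + q + j) (v + i + y) == p + q + minn (a + j) (v + i)) =
            (minn (b + q) (t + y) == p + q + minn a t) by lia.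
  by apply: minor_free_product_arith_core => //; lia.
rewrite (eqP (ltnW lt_rj)) !minn0; lia.
Qed.

Section FreeProduct.
Variables (E : finType) (M N : matroid E).
Hypotheses (mM : is_matroid M) (mN : is_matroid N).
Hypothesis dMN : [disjoint ground M & ground N].
Local Notation S := (ground M).
Local Notation T := (ground N).
Implicit Types C I U V W X : {set E}.

Lemma card_split_ground C : C \subset S :|: T -> #|C| = #|C :&: S| + #|C :&: T|.
Proof.
move=> sC; rewrite -cardsU_disjoint -?setIUr ?(setIidPl sC) //.
exact: disjointW (subsetIr C S) (subsetIr C T) dMN.
Qed.

Lemma rank_free_product X : rank (free_product M N) X =
  minn (rank M (X :&: S) + #|X :&: T|) (rk M + rank N (X :&: T)).
Proof.
have rXS : rank M (X :&: S) <= rk M by apply/rankS/subsetIr.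
apply/eqP; rewrite eqn_leq; apply/andP; split.
  apply/bigmax_leqP=> C /andP[sCX /and3P[sC iCS nCT]]; rewrite (card_split_ground sC).
  have := rank_indep iCS; have := indep_leq_rank (setSI S sCX) iCS.
  have := indep_leq_rank (indep_ground mM iCS) iCS.
  have := subset_leq_card (setSI T sCX); have := rankS N (setSI T sCX).
  by have := rank_leq_card N (C :&: T); move: nCT; rewrite /nullity /lambda /rk; lia.
have [BS sBS [iBS cBS]] := exists_basis (X :&: S) (indep_set0 mM).
have [CT sCT [/andP[sCTT nCT] cCT]] :=
  exists_basis (X :&: T) (indep_set0 (elongate_matroid mN (lambda M (X :&: S)))).
rewrite rank_elongate // -setIA setIid in cCT.
have sBSS : BS \subset S := indep_ground mM iBS.
have eS : (BS :|: CT) :&: S = BS.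
  rewrite setIUl (setIidPl sBSS) disjoint_setI0 ?setU0 //.
  by apply: disjointWl sCTT _; rewrite disjoint_sym.
have eT : (BS :|: CT) :&: T = CT.
  by rewrite setIUl (setIidPl sCTT) disjoint_setI0 ?set0U //; apply: disjointWl sBSS dMN.
have sBCX : BS :|: CT \subset X.
  by rewrite subUset (subset_trans sBS (subsetIl _ _)) (subset_trans sCT (subsetIl _ _)).
apply: leq_trans (indep_leq_rank sBCX _).
  by rewrite cardsU_disjoint ?cBS ?cCT ?(disjointW sBSS sCTT dMN) // /lambda; lia.
rewrite /= eS eT iBS subUset (subset_trans sBSS (subsetUl _ _)) (subset_trans sCTT (subsetUr _ _)).
by rewrite /lambda (rank_indep iBS) cBS.
Qed.

Lemma minor_free_product U V : U \subset V -> V \subset S :|: T ->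
  meq (minor (free_product M N) U V)
      (free_product (minor (truncate M (rk M - nullity N (U :&: T))) (U :&: S) (V :&: S))
                    (minor (elongate N (lambda M (V :&: S))) (U :&: T) (V :&: T))).
Proof.
move=> sUV sVST.
have eI I W : I \subset V :\: U -> I :&: ((V :&: W) :\: (U :&: W)) = I :&: W.
  move=> sI; apply/setP=> x; rewrite !inE; case xI: (x \in I) => //=.
  by have /setDP[-> /negbTE->] := subsetP sI x xI.
have gE : (V :&: S) :\: (U :&: S) :|: (V :&: T) :\: (U :&: T) = V :\: U.
  apply/setP=> x; move/(_ x): (subsetP sVST); rewrite !inE.
  by case: (x \in U) (x \in V) (x \in S) (x \in T) => [] [] [] [] // /(_ isT).
split=> [|I] /=; rewrite gE //; case sI: (I \subset V :\: U) => //=.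
have sIW W : I :&: W \subset (V :&: W) :\: (U :&: W) by rewrite -(eI I W sI) subsetIr.
have dIU : [disjoint I :&: T & U :&: T].
  by move: sI; rewrite subsetD => /andP[_]; apply: disjointW; apply: subsetIl.
set K1 := truncate M _; set K2 := elongate N _.
have mK1 : is_matroid K1 by apply: truncate_matroid.
have mK2 : is_matroid K2 by apply: elongate_matroid.
rewrite !eI // sIW /= /nullity /lambda rk_minor ?setSI //.
rewrite !rank_minor ?sIW // !(rank_truncate mM) !(rank_elongate mN) !rank_free_product.
rewrite !setIUl -!setIA !setIid cardsU_disjoint //.
rewrite (card_split_ground (subset_trans sI (subset_trans (subsetDl V U) sVST))).
have sIUS : I :&: S :|: U :&: S \subset V :&: S.
  by rewrite subUset (setSI S sUV) (subset_trans (sIW S) (subsetDl _ _)).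
apply: minor_free_product_arith; rewrite ?rankS ?rank_leq_card ?subsetUr ?subsetIr //=.
  by rewrite setUC rankU_leq.
by rewrite setUC rankU_leq.
Qed.

End FreeProduct.

Theorem theorem5p3 (E : finType) (M N : matroid E) (U V : {set E}) :
  is_matroid M -> is_matroid N -> [disjoint ground M & ground N] ->
  U \subset V -> V \subset ground M :|: ground N ->
  meq (minor (free_product M N) U V)
      (free_product
         (minor (iter (nullity N (U :&: ground N)) (@trunc E) M)
                (U :&: ground M) (V :&: ground M))
         (minor (iter (lambda M (V :&: ground M)) (@hlift E) N)
                (U :&: ground N) (V :&: ground N))).
Proof.
move=> mM mN dMN sUV sVST.
apply: meq_trans (minor_free_product mM mN dMN sUV sVST) _.
by apply: meq_free_product; apply: meq_minor; apply: meq_sym;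
  [apply: iter_trunc | apply: iter_hlift].
Qed.
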